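(* Fix a signal profile $\mathbf s$ and valuations $v_1,\dots,v_n$, and rename the bidders so that $v_1(\mathbf s)\ge v_2(\mathbf s)\ge\cdots\ge v_n(\mathbf s)$. Let $k=\max\{i: v_i(\mathbf s)>v_1(\mathbf s)/2\}$. Then for every $i\in[n]$, $$\mathbb E_{r,\pi}[c_i]\le\frac{1}{i(i+1)}+\frac{\log_2^\dagger\!\big(2v_i(\mathbf s)/\underline v_1^{(i)}(\mathbf s)\big)}{k+1}+\sum_{j\in[k]\setminus\{i\}}\frac{\log_2^\dagger\!\big(v_i(\mathbf s)/\underline v_j^{(i)}(\mathbf s)\big)}{j(j+1)}.$$
   Context: Single-item auction with $n$ bidders, signals $s_i\in S_i\subseteq\mathbb R$, valuations $v_i:\mathbf S\to\mathbb R_{>0}$, $\mathbf S=S_1\times\cdots\times S_n$. Lower estimates: $\underline v_j^{(i)}(\mathbf s)=\inf_{o_i\in S_i}v_j(o_i,\mathbf s_{-i})$ (for $j=i$ this is the infimum of bidder $i$'s own value over its own signal). $\log_2^\dagger(\alpha)=\max(0,\min(1,\log_2\alpha))$, with $a/0=\infty$ and $\log_2\infty=\infty$. For $r\in[0,1)$, $w>0$: $f_r(w)=2^{r+k'}$ for the integer $k'$ with $2^{r+k'}\le w<2^{r+k'+1}$; $f_r(0)=0$. For a permutation $\pi$ of $[n]$, $a$ associated with bidder $i$ and $b$ with bidder $j$: $a>_\pi b$ iff $a>b$, or $a=b$ and $\pi(i)>\pi(j)$. $c_i(r,\pi)=1$ iff $f_r(v_i(\mathbf s))>_\pi f_r(\underline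 v_j^{(i)}(\mathbf s))$ for all $j\ne i$, else $0$; $r\sim U[0,1)$ and $\pi$ uniformly random, independent. *)

From HB Require Import structures.
From mathcomp Require Import all_boot all_order all_algebra all_fingroup.
From mathcomp Require Import all_classical all_reals all_analysis.
Set Implicit Arguments. Unset Strict Implicit. Unset Printing Implicit Defensive.
Import Order.TTheory GRing.Theory Num.Theory.
Local Open Scope classical_set_scope.
Local Open Scope ring_scope.

Section Auction.
Context {R : realType} {n : nat}.

Definition upd (s : 'I_n -> R) (i : 'I_n) (o : R) : 'I_n -> R :=
  fun k => if k == i then o else s k.

Definition lowv (S : 'I_n -> set R) (v : 'I_n -> ('I_n -> R) -> R)
  (s : 'I_n -> R) (i j : 'I_n) : R :=
  inf [set v j (upd s i o) | o in S i].

Definition log2 (x : R) : R := ln x / ln 2.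

(* log2^dagger(a / b), with a / 0 = oo and log2 oo = oo (so the value is 1) *)
Definition log2dag_div (a b : R) : R :=
  if b == 0 then 1 else Num.max 0 (Num.min 1 (log2 (a / b))).

(* f_r(w) = 2^(r+k') where 2^(r+k') <= w < 2^(r+k'+1); f_r(0) = 0.
   The integer k' is floor(log2 w - r). *)
Definition fr (r w : R) : R :=
  if 0 < w then 2 `^ (r + (Num.floor (log2 w - r))%:~R) else 0.

Definition gt_pi (p : {perm 'I_n}) (a : R) (i : 'I_n) (b : R) (j : 'I_n) : bool :=
  (b < a) || ((a == b) && (p j < p i)%N).

Definition c_alloc (S : 'I_n -> set R) (v : 'I_n -> ('I_n -> R) -> R)
  (s : 'I_n -> R) (i : 'I_n) (r : R) (p : {perm 'I_n}) : R :=
  if [forall j : 'I_n, (j != i) ==> gt_pi p (fr r (v i s)) i (fr r (lowv S v s i j)) j]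
  then 1 else 0.

Definition Ec (S : 'I_n -> set R) (v : 'I_n -> ('I_n -> R) -> R)
  (s : 'I_n -> R) (i : 'I_n) : \bar R :=
  (\int[lebesgue_measure]_(r in `[0%R, 1%R[)
     ((\sum_(p : {perm 'I_n}) c_alloc S v s i r p) / #|{perm 'I_n}|%:R)%:E)%E.

Definition kidx (v : 'I_n -> ('I_n -> R) -> R) (s : 'I_n -> R) (i1 : 'I_n) : nat :=
  \max_(i : 'I_n | v i1 s / 2 < v i s) i.+1.

End Auction.

From HB Require Import structures.
From mathcomp Require Import all_boot all_order all_algebra all_fingroup.
From mathcomp Require Import all_classical all_reals all_analysis.
From mathcomp Require Import measurable_realfun lra ring.
Import Order.TTheory GRing.Theory Num.Theory.
Local Open Scope classical_set_scope.
Local Open Scope ring_scope.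

(* Since f_r(2 w) = 2 f_r(w), bidder i surely loses when
   f_r(v_1^{(i)}) >= f_r(2 v_i), and f_r(y) < f_r(x) holds exactly when an
   integer lies in (log2 y - r, log2 x - r], an event of probability
   log2^dagger(x / y) for r uniform in [0, 1).  Otherwise let M be the bidders
   j < k, j <> i, whose rounded estimate does not fall strictly below f_r(v_i):
   i can only win if pi ranks it above all of M, which has probability
   1 / (|M| + 1), and 1 / (|M| + 1) <= 1 / (k + 1) + sum of 1 / (j (j + 1))
   over the k - |M| other indices j <= k, because these weights telescope.
   Integrating this pointwise bound in r gives the theorem. *)

Section LebesgueBounds.
Context {R : realType}.
Local Notation mu := (@lebesgue_measure R).

(* No measurability is needed: the integral of a nonnegative function is the
   supremum of the integrals of the simple functions below it. *)
Lemma ge0_le_integral_sup (D : set R) (f g : R -> \bar R) :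
  (forall x, D x -> (0 <= f x)%E) -> (forall x, D x -> (f x <= g x)%E) ->
  (\int[mu]_(x in D) f x <= \int[mu]_(x in D) g x)%E.
Proof.
move=> f0 fg.
have g0 x : D x -> (0 <= g x)%E by move=> Dx; exact: le_trans (f0 _ Dx) (fg _ Dx).
rewrite ge0_integralE // [X in (_ <= X)%E]ge0_integralE //=.
apply: ereal_sup_le => _ [h /= hf <-]; exists h => //= x.
apply: le_trans (hf x) _; rewrite /patch; case: ifP => // /set_mem Dx; exact: fg.
Qed.

Lemma lebesgue_measure_itv_le (a b : R) (ba bb : bool) : a <= b ->
  (mu [set` Interval (BSide ba a) (BSide bb b)] <= (b - a)%:E)%E.
Proof.
by move=> ab; rewrite lebesgue_measure_itv /=; case: ifPn; rewrite // lee_fin subr_ge0.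
Qed.

Lemma lebesgue_measure_co01 : mu `[0, 1[%classic = 1%E.
Proof. by rewrite lebesgue_measure_itv /= lte_fin ltr01 oppr0 adde0. Qed.

Lemma integral_sum_indic_le (T : Type) (s : seq T) (D : set R)
    (a b : T -> R) (I : T -> set R) :
  measurable D -> (forall t, 0 <= a t) -> (forall t, measurable (I t)) ->
  (forall t, (mu (I t) <= (b t)%:E)%E) ->
  (\int[mu]_(x in D) (\sum_(t <- s) a t * \1_(I t) x)%:E
     <= (\sum_(t <- s) a t * b t)%:E)%E.
Proof.
move=> mD a0 mI Ib.
have mindic t : measurable_fun D (\1_(I t) : R -> R) by exact: measurable_indic.
under eq_integral do rewrite -sumEFin.
rewrite ge0_integral_sum //; last 2 first.
- move=> t; apply/measurable_EFinP.
  by apply: measurable_funM; [exact: measurable_cst | exact: mindic].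
- by move=> t x _; rewrite lee_fin mulr_ge0.
rewrite -sumEFin; apply: lee_sum => t _.
under eq_integral do rewrite EFinM.
rewrite ge0_integralZl_EFin; [|exact: mD|by move=> x _; rewrite lee_fin|
  by apply/measurable_EFinP; exact: mindic|exact: a0].
rewrite integral_indic //; last exact: mI.
rewrite (EFinM (a t)).
apply: lee_wpmul2l; first by rewrite lee_fin.
apply: le_trans (Ib t); apply: le_measure; rewrite ?inE //; last exact: mI.
exact: (measurableI _ _ (mI t) mD).
Qed.

End LebesgueBounds.

Section Rounding.
Context {R : realType}.
Implicit Types (r w x y : R).

Lemma fr_gt0 r w : 0 < w -> 0 < fr r w.
Proof. by move=> w0; rewrite /fr w0 powR_gt0. Qed.

Lemma log2_div x y : 0 < x -> 0 < y -> log2 (x / y) = log2 x - log2 y.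
Proof. by move=> x0 y0; rewrite /log2 lnM ?posrE ?invr_gt0 // lnV ?posrE // mulrBl. Qed.

Lemma ln2_gt0 : 0 < ln (2 : R).
Proof. by apply: ln_gt0; rewrite ltr1n. Qed.

Lemma log2_2M w : 0 < w -> log2 (2 * w) = 1 + log2 w.
Proof. by move=> w0; rewrite /log2 lnM ?posrE // mulrDl divff // gt_eqF ?ln2_gt0. Qed.

Lemma fr_2M r w : 0 < w -> fr r (2 * w) = 2 * fr r w.
Proof.
move=> w0; rewrite /fr w0 mulr_gt0 // log2_2M // -addrA floorDzr ?intr_int //.
rewrite floor1 intrD addrCA [LHS]powRD; last by apply/implyP => _; rewrite pnatr_eq0.
by rewrite (_ : 1%:~R = 1) // powRr1.
Qed.

Lemma fr_lt_floor r x y : 0 < x -> 0 < y -> fr r y < fr r x ->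
  (Num.floor (log2 y - r) < Num.floor (log2 x - r))%R.
Proof.
move=> x0 y0; rewrite /fr x0 y0; apply: contraTT; rewrite -!leNgt => le_xy.
by apply: ler_powR; [rewrite ler1n | rewrite lerD2l ler_int].
Qed.

Lemma floor_sub_lt r x y : 0 <= r < 1 ->
  (Num.floor (y - r) < Num.floor (x - r))%R ->
  let m := (Num.floor x)%:~R in y - m < r <= x - m \/ y - m + 1 < r.
Proof.
move=> /andP[r0 r1] + m; have /andP[mx xm] := floor_itv x.
rewrite -/m intrD (_ : 1%:~R = 1) // in xm.
case: (leP r (x - m)) => rxm.
  have -> : Num.floor (x - r) = Num.floor x.
    by apply: floor_def; rewrite -/m intrD; apply/andP; split; lra.
  by rewrite floor_lt_int -/m => ?; left; apply/andP; split; lra.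
have -> : Num.floor (x - r) = Num.floor x - 1.
  by apply: floor_def; rewrite intrD intrN subrK -/m; apply/andP; split; lra.
by rewrite floor_lt_int intrD intrN -/m => ?; right; lra.
Qed.

Lemma log2dag_div_le1 x y : log2dag_div x y <= 1.
Proof. by rewrite /log2dag_div; case: ifP => // _; rewrite ge_max ler01 ge_min lexx. Qed.

Lemma log2dag_div_eq1 x y : 0 <= y -> 2 * y <= x -> log2dag_div x y = 1.
Proof.
move=> y0 yx; rewrite /log2dag_div; have [//|yn0] := eqVneq y 0.
have ypos : 0 < y by rewrite lt_neqAle eq_sym yn0.
have le1 : 1 <= log2 (x / y).
  rewrite /log2 ler_pdivlMr ?ln2_gt0 // mul1r ler_ln ?posrE ?divr_gt0 //; last lra.
  by rewrite ler_pdivlMr // mulrC.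
by rewrite (min_idPl le1) (max_idPr ler01).
Qed.

Lemma fr_lt_cover x y : 0 < x -> 0 <= y -> exists I : set R,
  [/\ measurable I, (forall r, 0 <= r < 1 -> fr r y < fr r x -> I r) &
      (lebesgue_measure I <= (log2dag_div x y)%:E)%E].
Proof.
move=> x0 y0.
have [->|dag_neq1] := eqVneq (log2dag_div x y) 1.
  by exists `[0, 1[%classic; split => //; rewrite lebesgue_measure_co01.
have {}y0 : 0 < y.
  rewrite lt_neqAle y0 andbT; apply: contraNneq dag_neq1 => <-.
  by rewrite /log2dag_div eqxx.
have dag : log2dag_div x y = Num.max 0 (Num.min 1 (log2 x - log2 y)).
  by rewrite /log2dag_div gt_eqF // log2_div.
have d1 : log2 x - log2 y < 1.
  rewrite ltNge; apply: contra dag_neq1 => d1.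
  by rewrite dag (min_idPl d1) (max_idPr ler01).
have fr_floor r := @fr_lt_floor r _ _ x0 y0.
have [d0|d0] := leP (log2 x - log2 y) 0.
  exists set0; split => //; last by rewrite measure0 dag lee_fin le_max lexx.
  move=> r _ /fr_floor; rewrite ltNge => /negP; apply; apply: le_floor; lra.
rewrite dag (min_idPr (ltW d1)) (max_idPr (ltW d0)).
set m : R := (Num.floor (log2 x))%:~R.
have /andP[mx xm] := floor_itv (log2 x).
rewrite -/m intrD (_ : 1%:~R = 1) // in xm.
have cover r (r01 : 0 <= r < 1) lt_fr := floor_sub_lt _ _ _ r01 (fr_floor r lt_fr).
(* Modulo 1 the offsets in question form an interval of length
   log2 x - log2 y ending at log2 x - m: it either fits in [0, 1) or wraps. *)
have [le_d|lt_d] := leP (log2 x - log2 y) (log2 x - m).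
  exists `]log2 y - m, log2 x - m]%classic; split => //.
    move=> r r01 /(cover _ r01) /= [|]; first by rewrite in_itv.
    by move: r01 => /andP[_ r1]; lra.
  by apply: le_trans (lebesgue_measure_itv_le _ _ _ _ _) _; rewrite ?lee_fin; lra.
exists (`[0, log2 x - m] `|` `]log2 y - m + 1, 1[)%classic; split.
- exact: measurableU.
- move=> r r01 /(cover _ r01) [/andP[_ rxm]|ltr].
    by left; rewrite /= in_itv /= rxm andbT; case/andP: r01.
  by right; rewrite /= in_itv /= ltr; case/andP: r01.
- apply: le_trans (measureU2 _ _ _) _ => //.
  have t0 : 0 <= log2 x - m by lra.
  have t1 : log2 y - m + 1 <= 1 by lra.
  apply: le_trans (leeD (lebesgue_measure_itv_le _ _ _ _ t0)
                        (lebesgue_measure_itv_le _ _ _ _ t1)) _.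
  by rewrite -EFinD lee_fin; lra.
Qed.

End Rounding.

Section RankedAbove.
Context {n : nat}.
Local Open Scope nat_scope.

Definition ranked_above (i : 'I_n) (M : {set 'I_n}) : {set {perm 'I_n}} :=
  [set p : {perm 'I_n} | [forall j in M, p j < p i]]%SET.

Lemma ranked_aboveP (i : 'I_n) (M : {set 'I_n}) (p : {perm 'I_n}) :
  reflect (forall j, j \in M -> p j < p i) (p \in ranked_above i M).
Proof. by rewrite inE; apply: (iffP forall_inP). Qed.

(* Composing with the transposition of x and y moves the top element from x to y. *)
Lemma card_ranked_above_le (U : {set 'I_n}) (x y : 'I_n) : y \in U ->
  #|ranked_above x (U :\ x)| <= #|ranked_above y (U :\ y)|.
Proof.
move=> yU; rewrite -(card_imset _ (mulgI (tperm x y))).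
apply: subset_leq_card; apply/fintype.subsetP => _ /imsetP[p /ranked_aboveP x_top ->].
apply/ranked_aboveP => j /setD1P[jy jU]; rewrite !permM tpermR.
apply: x_top; apply/setD1P; move: jy jU.
by case: tpermP => [->|->|/eqP jx _] //; [rewrite eq_sym => -> | rewrite eqxx].
Qed.

(* A permutation ranks at most one element of U above all the others. *)
Lemma sum_card_ranked_above (U : {set 'I_n}) :
  \sum_(x in U) #|ranked_above x (U :\ x)| <= n`!.
Proof.
rewrite -card_Sn -sum1_card.
under eq_bigr do rewrite -sum1_card big_mkcond /=.
rewrite exchange_big /=; apply: leq_sum => p _; rewrite -big_mkcondr /= sum1_card.
apply/card_le1_eqP => x y /andP[xU /ranked_aboveP x_top] /andP[yU /ranked_aboveP y_top].
apply: contraTeq isT => xy.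
have xUy : x \in U :\ y by rewrite !inE eq_sym xy xU.
have yUx : y \in U :\ x by rewrite !inE xy yU.
by have := ltn_trans (y_top _ xUy) (x_top _ yUx); rewrite ltnn.
Qed.

Lemma card_ranked_above (i : 'I_n) (M : {set 'I_n}) : i \notin M ->
  #|M|.+1 * #|ranked_above i M| <= n`!.
Proof.
move=> iM; set U := i |: M.
have -> : M = U :\ i by rewrite setU1K.
rewrite [X in X * _](_ : _ = #|U|); last by rewrite (cardsD1 i U) setU11.
rewrite -sum_nat_const.
apply: leq_trans (sum_card_ranked_above U); apply: leq_sum => x xU.
exact: card_ranked_above_le.
Qed.

End RankedAbove.

Section HarmonicGap.
Context {R : realType}.
Local Open Scope ring_scope.

Lemma invS_le (e a : R) : 1 <= e -> e <= a ->
  1 / (e + 1) <= 1 / (a + 1) + (1 / e - 1 / a).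
Proof.
move=> e1 ea.
have telescope (x : R) : 0 < x -> 1 / x - 1 / (x + 1) = 1 / (x * (x + 1)).
  by move=> x0; field; rewrite !gt_eqF //; lra.
suff : 1 / a - 1 / (a + 1) <= 1 / e - 1 / (e + 1) by lra.
rewrite !telescope; try lra.
by rewrite !div1r lef_pV2 ?posrE; nra.
Qed.

Lemma harmonic_gap_le K (P : pred 'I_K) :
  1 / (\sum_(j < K | ~~ P j) 1)%N.+1%:R
    <= 1 / K.+1%:R + \sum_(j < K | P j) (1 / (j.+1 * j.+2)%:R : R).
Proof.
elim: K P => [|K IH] P; first by rewrite !big_ord0 addr0.
have le_count : (\sum_(j < K | ~~ P (widen_ord (leqnSn K) j)) 1 <= K)%N.
  rewrite big_mkcond /= -[leqRHS]card_ord -sum1_card.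
  by apply: leq_sum => j _; case: (~~ _).
move: (IH (fun j => P (widen_ord (leqnSn K) j))) le_count.
rewrite (big_mkcond (fun j => ~~ P j)) (big_mkcond P) !big_ord_recr /= -!big_mkcond.
set c := (\sum_(j < K | _) 1)%N; set S := \sum_(j < K | _) _.
case: (P ord_max) => /= IHP c_le.
  rewrite addn0 addrCA (_ : 1 / K.+2%:R + _ = 1 / K.+1%:R) 1?addrC //.
  have K0 := ler0n R K.
  by rewrite natrM; field; apply/andP; split; rewrite gt_eqF //; lra.
rewrite addr0 addn1 -[c.+2%:R]natr1 -[K.+2%:R]natr1.
apply: le_trans (invS_le c.+1%:R K.+1%:R _ _) _;
  by rewrite ?lerD2l ?lerBlDl ?ler1n ?ler_nat ?ltnS.
Qed.

Lemma harmonic_gap_le_narrow n K (P : pred 'I_n) : (K <= n)%N ->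
  1 / #|[set j : 'I_n | (j < K)%N && ~~ P j]%SET|.+1%:R
    <= 1 / K.+1%:R + \sum_(j : 'I_n | (j < K)%N && P j) (1 / (j.+1 * j.+2)%:R : R).
Proof.
move=> le_Kn; have := harmonic_gap_le _ (fun j : 'I_K => P (widen_ord le_Kn j)).
have narrow V (idx : V) (op : V -> V -> V) (Q : pred 'I_n) (F : nat -> V) :
    \big[op/idx]_(j : 'I_n | (j < K)%N && Q j) F j
      = \big[op/idx]_(j < K | Q (widen_ord le_Kn j)) F j.
  rewrite (eq_bigl (fun j => Q j && (j < K)%N)); first exact: big_ord_narrow_cond.
  by move=> j; rewrite andbC.
have -> : #|[set j : 'I_n | (j < K)%N && ~~ P j]%SET|
    = (\sum_(j < K | ~~ P (widen_ord le_Kn j)) 1)%N.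
  rewrite -(narrow _ _ _ (fun j => ~~ P j) (fun=> 1%N)) -sum1_card.
  by apply: eq_bigl => j; rewrite inE.
by rewrite (narrow _ _ _ P (fun j => 1 / (j.+1 * j.+2)%:R)).
Qed.

End HarmonicGap.

Section Auction.
Context {R : realType} {n : nat}.
Context {S : 'I_n -> set R} {v : 'I_n -> ('I_n -> R) -> R} {s : 'I_n -> R}.
Hypothesis hs : forall i, S i (s i).
Hypothesis hv : forall j (t : 'I_n -> R), (forall i, S i (t i)) -> 0 < v j t.

Let low i j := [set v j (upd s i o) | o in S i].

Lemma low_gt0 i j x : low i j x -> 0 < x.
Proof.
move=> [u Su <-]; apply: hv => k; rewrite /upd.
by case: eqP => [->|].
Qed.

Lemma lowv_ge0 i j : 0 <= lowv S v s i j.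
Proof.
apply: lb_le_inf => [|x /low_gt0/ltW //].
by exists (v j (upd s i (s i))), (s i).
Qed.

Lemma lowv_le i j : lowv S v s i j <= v j s.
Proof.
have -> : v j s = v j (upd s i (s i)).
  by congr (v j _); apply/funext => k; rewrite /upd; case: eqP => [->|].
apply: ge_inf; last by exists (s i).
by exists 0 => x /low_gt0/ltW.
Qed.

Variable i : 'I_n.
Local Notation c r p := (c_alloc S v s i r p).
Local Notation w j := (1 / (j.+1 * j.+2)%:R : R).

Lemma c_alloc_eq0 r p j : j != i -> fr r (v i s) < fr r (lowv S v s i j) -> c r p = 0.
Proof.
move=> ji lt_ij; rewrite /c_alloc; case: ifPn => // /forallP /(_ j).
by rewrite ji /= /gt_pi ltNge (ltW lt_ij) /= (lt_eqF lt_ij).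
Qed.

Lemma c_alloc_le_ranked r p (M : {set 'I_n}) :
  (forall j, j \in M -> (j != i) && (fr r (v i s) <= fr r (lowv S v s i j))) ->
  c r p <= (p \in ranked_above i M)%:R.
Proof.
move=> Mtie; rewrite /c_alloc; case: ifPn => [/forallP win|]; last by case: (_ \in _).
suff -> : p \in ranked_above i M by [].
apply/ranked_aboveP => j /Mtie /andP[ji le_ij].
move: (implyP (win j) ji); rewrite /gt_pi ltNge le_ij /=.
by case/andP.
Qed.

Lemma mean_c_alloc_le r K (P : pred 'I_n) : (K <= n)%N -> P i ->
  (forall j, ~~ P j -> fr r (v i s) <= fr r (lowv S v s i j)) ->
  (\sum_p c r p) / #|{perm 'I_n}|%:R
    <= 1 / K.+1%:R + \sum_(j : 'I_n | (j < K)%N && P j) w j.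
Proof.
move=> le_Kn Pi tie.
set M := [set j : 'I_n | (j < K)%N && ~~ P j]%SET.
have iM : i \notin M by rewrite inE Pi andbF.
have sum_le : \sum_p c r p <= #|ranked_above i M|%:R.
  rewrite -sum1_card natr_sum [X in _ <= X]big_mkcond /=; apply: ler_sum => p _.
  apply: le_trans (c_alloc_le_ranked r p M _) _; last by case: (_ \in _).
  move=> j; rewrite inE => /andP[_ Pj].
  by rewrite tie // andbT; apply: contraNneq Pj => ->.
apply: le_trans (harmonic_gap_le_narrow _ _ P le_Kn); rewrite card_Sn.
have := card_ranked_above _ _ iM; rewrite -(ler_nat R) natrM => le_fact.
rewrite ler_pdivrMr ?ltr0n ?fact_gt0 // div1r ler_pdivlMl ?ltr0n //.
by apply: le_trans le_fact; rewrite ler_wpM2l.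
Qed.

Lemma c_alloc_support_cover i1 : exists I0 : set R, [/\ measurable I0,
  (forall r p, 0 <= r < 1 -> ~ I0 r -> c r p = 0) &
  (lebesgue_measure I0 <= (log2dag_div (2 * v i s) (lowv S v s i i1))%:E)%E].
Proof.
have vi_gt0 : 0 < v i s by apply: hv.
have [<-|i1i] := eqVneq i1 i.
  exists `[0, 1[%classic; split => //.
  by rewrite log2dag_div_eq1 ?lowv_ge0 ?ler_pM2l ?lowv_le // lebesgue_measure_co01.
have [I0 [mI0 I0cover I0b]] :=
  fr_lt_cover _ _ (mulr_gt0 (ltr0n R 2) vi_gt0) (lowv_ge0 i i1).
exists I0; split => // r p r01 nI0r; apply: (c_alloc_eq0 _ _ _ i1i).
have : ~ fr r (lowv S v s i i1) < fr r (2 * v i s) by move/(I0cover _ r01).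
rewrite fr_2M // => /negP; rewrite -leNgt; apply: lt_le_trans.
by rewrite ltr_pMl ?fr_gt0 // ltr1n.
Qed.

Section Cover.
Context {K : nat} {I0 : set R} {I : 'I_n -> set R} {b0 : R} {b : 'I_n -> R}.
Hypotheses (le_Kn : (K <= n)%N) (mI0 : measurable I0) (mI : forall j, measurable (I j)).
Hypotheses (I0b : (lebesgue_measure I0 <= b0%:E)%E) (b0_le1 : b0 <= 1).
Hypothesis Ib : forall j, (lebesgue_measure (I j) <= (b j)%:E)%E.
Hypothesis c_eq0 : forall r p, 0 <= r < 1 -> ~ I0 r -> c r p = 0.
Hypothesis I_cover :
  forall r j, 0 <= r < 1 -> j != i -> fr r (lowv S v s i j) < fr r (v i s) -> I j r.

Lemma Ec_le_cover : (Ec S v s i <= (w i + b0 / K.+1%:R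
  + \sum_(j : 'I_n | (j < K)%N && (j != i)) b j / (j.+1 * j.+2)%:R)%:E)%E.
Proof.
(* The constant [w i] is charged to I0 as well; this is harmless as b0 <= 1. *)
pose a j := if j == i then w i + 1 / K.+1%:R else if (j < K)%N then w j else 0.
pose J j := if j == i then I0 else I j.
have a_ge0 j : 0 <= a j by rewrite /a; do 2?case: ifP => _; rewrite ?addr_ge0.
have mean_le r : 0 <= r < 1 ->
    (\sum_p c r p) / #|{perm 'I_n}|%:R <= \sum_j a j * \1_(J j) r.
  move=> r01; have [I0r|nI0r] := pselect (I0 r); last first.
    rewrite big1 ?mul0r => [|p _]; last exact: c_eq0.
    by apply: sumr_ge0 => j _; rewrite mulr_ge0.
  pose P j := (j == i) || (fr r (lowv S v s i j) < fr r (v i s)).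
  apply: le_trans (mean_c_alloc_le r K P le_Kn _ _) _.
  - by rewrite /P eqxx.
  - by move=> j; rewrite /P negb_or leNgt => /andP[].
  rewrite big_mkcond (bigD1 i) //= [X in _ <= X](bigD1 i) //= addrA.
  rewrite /a /J eqxx indicE mem_set // mulr1; apply: lerD.
    by rewrite addrC lerD2r; case: ifP.
  apply: ler_sum => j ji; rewrite /P (negPf ji) /=.
  case: ifPn => [/andP[jK Aj]|_]; last by rewrite mulr_ge0 ?indicE //; case: ifP.
  by rewrite jK indicE mem_set ?mulr1 //; exact: I_cover.
pose bJ j := if j == i then b0 else b j.
have mJ j : measurable (J j) by rewrite /J; case: ifP.
have JbJ j : (lebesgue_measure (J j) <= (bJ j)%:E)%E by rewrite /J /bJ; case: ifP.
apply: le_trans (ge0_le_integral_sup _ _ (fun r => (\sum_j a j * \1_(J j) r)%:E) _ _) _.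
- move=> r _; rewrite lee_fin divr_ge0 // sumr_ge0 // => p _.
  by rewrite /c_alloc; case: ifP.
- by move=> r; rewrite /= in_itv lee_fin => /mean_le.
apply: le_trans (integral_sum_indic_le _ _ _ _ _ _ (measurable_itv _) a_ge0 mJ JbJ) _.
rewrite lee_fin (bigD1 i) //= big_mkcondl /= /a /bJ eqxx; apply: lerD.
  rewrite mulrDl lerD ?ler_piMr //; last by rewrite mul1r mulrC.
apply: ler_sum => j ji; rewrite (negPf ji).
by case: ifP; rewrite ?mul0r // mulrC mul1r.
Qed.

End Cover.

End Auction.

Theorem mainTheorem10 (R : realType) (n : nat) (n0 : (0 < n)%N)
  (S : 'I_n -> set R) (v : 'I_n -> ('I_n -> R) -> R) (s : 'I_n -> R)
  (hs : forall i, S i (s i))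
  (hv : forall j (t : 'I_n -> R), (forall i, S i (t i)) -> 0 < v j t)
  (hsorted : forall i j : 'I_n, (i <= j)%N -> v j s <= v i s) :
  let i1 := Ordinal n0 in
  let k := kidx v s i1 in
  forall i : 'I_n,
  (Ec S v s i <=
   (1 / (i.+1 * i.+2)%:R
    + log2dag_div (2 * v i s) (lowv S v s i i1) / k.+1%:R
    + \sum_(j : 'I_n | (j < k)%N && (j != i))
        log2dag_div (v i s) (lowv S v s i j) / (j.+1 * j.+2)%:R)%:E)%E.
Proof.
move=> i1 k i.
have le_kn : (k <= n)%N by apply/bigmax_leqP => j _; exact: ltn_ord.
have vi_gt0 : 0 < v i s by apply: hv.
have [I0 [mI0 c_eq0 I0b]] := c_alloc_support_cover hs hv i i1.
have [I /all_and3[mI I_cover Ib]] :=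
  choice (fun j => fr_lt_cover _ _ vi_gt0 (lowv_ge0 hs hv i j)).
apply: (Ec_le_cover i le_kn mI0 mI I0b (log2dag_div_le1 _ _) Ib c_eq0).
by move=> r j r01 _; exact: I_cover.
Qed.
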